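(* For every disjunctive finitely recursive program $P$: if some module sequence for $P$ is consistent, then $P$ is consistent.
   Context: A disjunctive program is a set of rules $A_1\vee\dots\vee A_m\leftarrow L_1,\dots,L_n$ ($m>0$, $n\ge0$), $A_j$ atoms, $L_i$ atoms or negated atoms $\mathtt{not}\,A$, possibly with function symbols; $head(r)=\{A_1,\dots,A_m\}$. $\mathsf{Ground}(P)$ is its ground instantiation. For a set $M$ of ground atoms, $P^M$ is obtained from $\mathsf{Ground}(P)$ by deleting rules having some $\mathtt{not}\,B$ in the body with $B\in M$ and deleting negative literals from the remaining rules; $M$ is a stable model iff it is a minimal Herbrand model of $P^M$. A program is consistent iff it has a stable model. The dependency graph has ground atoms as vertices and an edge $A\to B$ whenever some $r\in\mathsf{Ground}(P)$ has $A\in head(r)$ and $B$ occurring in $r$ (body, positively or negated, or head); $A$ depends on $B$ if there is a directed path from $A$ to $B$ (every atom depends on itself). $P$ is finitely recursive iff each ground atom depends on finitely many ground atoms. With $GH$ the set of ground head atoms of $\mathsf{Ground}(P)$ and an enumeration $p_1,p_2,\dots$ of $GH$, the induced module sequence is $P_1=\{r\in\mathsf{Ground}(P)\mid p_1$ depends on some atom of $head(r)\}$, $P_{i+1}=P_i\cup\{r\in\mathsf{Ground}(P)\mid p_{i+1}$ depends on some atom of $head(r)\}$. A module sequence is consistent if every $P_i$ is consistent. *)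

From Stdlib Require Import List Relations.
Import ListNotations.
Set Implicit Arguments.

Section Syntax.
Variables (F Pr : Type).

(* First-order terms over function symbols F; variables indexed by nat.
   Constants are function symbols applied to no arguments. *)
Inductive term : Type :=
| Var : nat -> term
| Fn : F -> list term -> term.

Fixpoint subst (s : nat -> term) (t : term) : term :=
  match t with
  | Var v => s v
  | Fn f ts => Fn f (map (subst s) ts)
  end.

Fixpoint ground_term (t : term) : Prop :=
  match t with
  | Var _ => False
  | Fn _ ts => (fix go (l : list term) : Prop :=
                  match l with nil => True | u :: l' => ground_term u /\ go l' end) ts
  end.

Record atom : Type := Atom { pred : Pr; args : list term }.

Definition subst_atom (s : nat -> term) (a : atom) : atom :=
  Atom (pred a) (map (subst s) (args a)).

(* A rule  A_1 v ... v A_m <- B_1,...,B_k, not C_1, ..., not C_l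
   (the body literals split into positive and negated atoms). *)
Record rule : Type := Rule { head : list atom; pos : list atom; neg : list atom }.

Definition subst_rule (s : nat -> term) (r : rule) : rule :=
  Rule (map (subst_atom s) (head r)) (map (subst_atom s) (pos r))
       (map (subst_atom s) (neg r)).

Definition program := list rule.
Definition well_formed (P : program) : Prop :=
  forall r, In r P -> head r <> nil.

Definition Ground (P : program) (g : rule) : Prop :=
  exists r s, In r P /\ (forall v, ground_term (s v)) /\ g = subst_rule s r.

Definition reduct (G : rule -> Prop) (M : atom -> Prop) (r : rule) : Prop :=
  exists g, G g /\ (forall B, In B (neg g) -> ~ M B) /\
            r = Rule (head g) (pos g) nil.

Definition model (G : rule -> Prop) (M : atom -> Prop) : Prop :=
  forall r, G r -> (forall B, In B (pos r) -> M B) ->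
            (forall B, In B (neg r) -> ~ M B) ->
            exists A, In A (head r) /\ M A.

Definition minimal_model (G : rule -> Prop) (M : atom -> Prop) : Prop :=
  model G M /\
  forall M' : atom -> Prop, model G M' -> (forall A, M' A -> M A) ->
                            (forall A, M A -> M' A).

Definition stable_model_ground (G : rule -> Prop) (M : atom -> Prop) : Prop :=
  minimal_model (reduct G M) M.

Definition consistent_ground (G : rule -> Prop) : Prop :=
  exists M, stable_model_ground G M.

Definition stable_model (P : program) (M : atom -> Prop) : Prop :=
  stable_model_ground (Ground P) M.

Definition consistent (P : program) : Prop := exists M, stable_model P M.

Definition occurs_in (B : atom) (r : rule) : Prop :=
  In B (head r) \/ In B (pos r) \/ In B (neg r).

Definition dep_edge (P : program) (A B : atom) : Prop :=
  exists r, Ground P r /\ In A (head r) /\ occurs_in B r.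

Definition depends (P : program) : atom -> atom -> Prop :=
  clos_refl_trans atom (dep_edge P).

Definition ground_atom (a : atom) : Prop := Forall ground_term (args a).

Definition finitely_recursive (P : program) : Prop :=
  forall A, ground_atom A ->
    exists l : list atom, forall B, depends P A B -> In B l.

Definition GH (P : program) (A : atom) : Prop :=
  exists r, Ground P r /\ In A (head r).

(* p : nat -> atom enumerates GH (p 0 = p_1, p 1 = p_2, ...) *)
Definition enumerates_GH (P : program) (p : nat -> atom) : Prop :=
  (forall i, GH P (p i)) /\ (forall A, GH P A -> exists i, p i = A).

(* Module P p i is P_{i+1} of the induced module sequence *)
Definition module (P : program) (p : nat -> atom) (i : nat) (r : rule) : Prop :=
  Ground P r /\ exists j, j <= i /\ exists A, In A (head r) /\ depends P (p j) A.

Definition consistent_module_sequence (P : program) (p : nat -> atom) : Prop :=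
  forall i, consistent_ground (module P p i).

End Syntax.

(* A finitely recursive program splits along the finite sets deps i of atoms
   on which p 0, ..., p i depend: deps i is a splitting set of every later
   module P_k, so a stable model of P_k restricts to one of P_i.  As each
   deps i is finite, a König-style compactness argument selects stable models
   N_i of the P_i that are coherent (N_k restricts to N_i for i <= k); their
   union agrees with N_i on deps i for every i, and since every ground rule
   lies in some P_i, it is a stable model of P. *)

From Pilot Require Import Defs.
From Stdlib Require Import List Relations.
From Stdlib Require Import Classical IndefiniteDescription FunctionalExtensionality
  PropExtensionality Lia.
Import ListNotations Defs.

Lemma pred_ext {X : Type} (P Q : X -> Prop) : (forall x, P x <-> Q x) -> P = Q.
Proof.
  intro H. apply functional_extensionality; intro x.
  apply propositional_extensionality, H.
Qed.

Definition restrict {T : Type} (U M : T -> Prop) : T -> Prop := fun x => M x /\ U x.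

Lemma restrict_restrict {T : Type} (U V M : T -> Prop) :
  (forall x, U x -> V x) -> restrict U (restrict V M) = restrict U M.
Proof.
  intro HUV. apply pred_ext; intro x; unfold restrict.
  split; [tauto|]. intros [HM HU]; auto.
Qed.

Lemma finite_subsets {T : Type} (l : list T) :
  exists cs : list (T -> Prop), forall N, (forall x, N x -> In x l) -> In N cs.
Proof.
  induction l as [|a l [cs Hcs]].
  - exists [fun _ => False]. intros N HN. left.
    apply pred_ext; intro x. split; [intros []|intro Hx; exact (HN x Hx)].
  - exists (cs ++ map (fun N x => N x \/ x = a) cs). intros N HN.
    set (N' := fun x => N x /\ x <> a).
    assert (HN' : In N' cs).
    { apply Hcs. intros x [Hx Hne]. destruct (HN x Hx) as [<-|H]; [contradiction|exact H]. }
    apply in_or_app. destruct (classic (N a)) as [Ha|Ha].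
    + right. replace N with (fun x => N' x \/ x = a); [exact (in_map (fun N x => N x \/ x = a) cs N' HN')|].
      apply pred_ext; intro x; unfold N'. split.
      * intros [[H _]| ->]; assumption.
      * intro H. destruct (classic (x = a)); [right|left; split]; assumption.
    + left. replace N with N'; [exact HN'|].
      apply pred_ext; intro x; unfold N'. split; [tauto|].
      intro H. split; [exact H|intros ->; contradiction].
Qed.

Lemma list_bound {X : Type} (Q : X -> nat -> Prop) (l : list X) :
  (forall c, In c l -> exists k, Q c k) ->
  exists K, forall c, In c l -> exists k, k <= K /\ Q c k.
Proof.
  induction l as [|a l IH]; intro H.
  - exists 0. intros c [].
  - destruct IH as [K HK]; [intros c Hc; apply H; right; exact Hc|].
    destruct (H a (or_introl eq_refl)) as [k Hk].
    exists (max K k). intros c [<-|Hc].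
    + exists k; split; [lia|exact Hk].
    + destruct (HK c Hc) as [k' [Hk' HQ]]. exists k'; split; [lia|exact HQ].
Qed.

Lemma dependent_sequence {X : Type} (Q : nat -> X -> Prop) (R : nat -> X -> X -> Prop) :
  (exists x, Q 0 x) ->
  (forall n x, Q n x -> exists y, Q (S n) y /\ R n x y) ->
  exists f : nat -> X, forall n, Q n (f n) /\ R n (f n) (f (S n)).
Proof.
  intros H0 HS.
  destruct (constructive_indefinite_description _ H0) as [x0 Hx0].
  pose (next := fun n (x : {x | Q n x}) =>
                  constructive_indefinite_description _ (HS n _ (proj2_sig x))).
  pose (seq := fix seq n : {x | Q n x} :=
                 match n with
                 | 0 => exist _ x0 Hx0
                 | S m => exist _ (proj1_sig (next m (seq m)))
                                  (proj1 (proj2_sig (next m (seq m))))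
                 end).
  exists (fun n => proj1_sig (seq n)). intro n.
  split; [exact (proj2_sig (seq n))|exact (proj2 (proj2_sig (next n (seq n))))].
Qed.

Section Koenig.
Context {T : Type} (U : nat -> T -> Prop) (Sol : nat -> (T -> Prop) -> Prop).
Hypothesis U_mono : forall i k x, i <= k -> U i x -> U k x.
Hypothesis U_finite : forall i, exists l, forall x, U i x -> In x l.
Hypothesis Sol_nonempty : forall k, exists M, Sol k M.
Hypothesis Sol_restrict : forall i k M, i <= k -> Sol k M -> Sol i (restrict (U i) M).

Definition extendable (V : T -> Prop) (i : nat) (N : T -> Prop) : Prop :=
  forall k, i <= k -> exists M, Sol k M /\ restrict V M = N.

Lemma extendable_empty : extendable (fun _ => False) 0 (fun _ => False).
Proof.
  intros k _. destruct (Sol_nonempty k) as [M HM].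
  exists M; split; [exact HM|]. apply pred_ext; unfold restrict; tauto.
Qed.

(* Pigeonhole: U j has finitely many subsets; if each failed to be extendable
   from some level on, a model at a level beyond all these would refute one. *)
Lemma extendable_refine V i j N :
  (forall x, V x -> U j x) -> i <= j -> extendable V i N ->
  exists N', extendable (U j) j N' /\ restrict V N' = N.
Proof.
  intros HV Hij HN.
  destruct (U_finite j) as [l Hl]. destruct (finite_subsets l) as [cs Hcs].
  apply NNPP; intro Hnone.
  assert (Hfail : forall c, In c cs -> exists k, j <= k /\
            ~ exists M, Sol k M /\ restrict (U j) M = c /\ restrict V M = N).
  { intros c _. apply NNPP; intro Hc. apply Hnone.
    assert (Hall : forall k, j <= k ->
              exists M, Sol k M /\ restrict (U j) M = c /\ restrict V M = N).
    { intros k Hk. apply NNPP; intro HnM. apply Hc. exists k; auto. }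
    exists c. split.
    - intros k Hk. destruct (Hall k Hk) as (M & HM & Hc' & _). eauto.
    - destruct (Hall j (le_n j)) as (M & _ & <- & <-). apply restrict_restrict, HV. }
  destruct (list_bound _ cs Hfail) as [K HK].
  destruct (HN (max j K)) as (M & HM & HMN); [lia|].
  destruct (HK (restrict (U j) M)) as (k & HkK & Hjk & Hno).
  { apply Hcs. intros x [_ Hx]. exact (Hl x Hx). }
  apply Hno. exists (restrict (U k) M). split; [exact (Sol_restrict k (max j K) M ltac:(lia) HM)|]. split.
  - apply restrict_restrict. intro x; apply U_mono, Hjk.
  - rewrite restrict_restrict; [exact HMN|]. intros x Hx. apply (U_mono j); auto.
Qed.

Theorem koenig_limit :
  exists M, (forall x, M x -> exists i, U i x) /\ forall i, Sol i (restrict (U i) M).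
Proof.
  destruct (dependent_sequence (fun n N => extendable (U n) n N)
              (fun n N N' => restrict (U n) N' = N)) as [N HN].
  - destruct (extendable_refine (fun _ => False) 0 0 (fun _ => False))
      as [N0 [HN0 _]]; [intros _ []|lia|exact extendable_empty|eauto].
  - intros n Nn HNn. apply (extendable_refine (U n) n (S n)); [|lia|exact HNn].
    intro x; apply U_mono; lia.
  - assert (Hsub : forall n x, N n x -> U n x).
    { intros n x Hx. destruct (proj1 (HN n) n (le_n n)) as (M & _ & HM).
      rewrite <- HM in Hx. exact (proj2 Hx). }
    assert (Hcoh : forall i k, i <= k -> restrict (U i) (N k) = N i).
    { induction 1 as [|k Hik IH].
      - apply pred_ext; intro x; unfold restrict. split; [tauto|].
        intro Hx; split; [exact Hx|exact (Hsub i x Hx)].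
      - rewrite <- IH, <- (proj2 (HN k)). symmetry. apply restrict_restrict.
        intro x; apply U_mono, Hik. }
    exists (fun x => exists n, N n x). split.
    + intros x [n Hn]. exists n; exact (Hsub n x Hn).
    + intro i. replace (restrict (U i) (fun x => exists n, N n x)) with (N i).
      * destruct (proj1 (HN i) i (le_n i)) as (M & HM & <-). exact (Sol_restrict i i M (le_n i) HM).
      * apply pred_ext; intro x; split.
        -- intro Hx. split; [exists i; exact Hx|exact (Hsub i x Hx)].
        -- intros [[n Hn] Hx]. destruct (PeanoNat.Nat.le_ge_cases i n) as [Hin|Hni].
           ++ rewrite <- (Hcoh i n Hin). split; assumption.
           ++ rewrite <- (Hcoh n i Hni) in Hn. exact (proj1 Hn).
Qed.

End Koenig.

Section StableModels.
Context {F Pr : Type}.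
Implicit Types (G : rule F Pr -> Prop) (M N : atom F Pr -> Prop).

Lemma model_reduct_intro G M N :
  (forall g, G g -> (forall B, In B (neg g) -> ~ M B) -> (forall B, In B (pos g) -> N B) ->
     exists A, In A (head g) /\ N A) ->
  model (reduct G M) N.
Proof. intros H r [g [Hg [Hneg ->]]] Hpos _. exact (H g Hg Hneg Hpos). Qed.

Lemma model_reduct_elim {G M N g} :
  model (reduct G M) N -> G g ->
  (forall B, In B (neg g) -> ~ M B) -> (forall B, In B (pos g) -> N B) ->
  exists A, In A (head g) /\ N A.
Proof.
  intros HN Hg Hneg Hpos. apply (HN (Rule (head g) (pos g) nil)).
  - exists g; auto.
  - exact Hpos.
  - intros _ [].
Qed.

Definition bottom G (U : atom F Pr -> Prop) : rule F Pr -> Prop :=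
  fun g => G g /\ exists A, In A (head g) /\ U A.

(* Bottom half of the Lifschitz-Turner splitting set theorem. *)
Lemma stable_model_bottom G U M :
  (forall g B, bottom G U g -> occurs_in B g -> U B) ->
  stable_model_ground G M -> stable_model_ground (bottom G U) (restrict U M).
Proof.
  intros Hsplit [HM Hmin]. split.
  - apply model_reduct_intro. intros g Hbot Hneg Hpos.
    destruct (model_reduct_elim HM (proj1 Hbot)) as [A [HA HMA]].
    + intros B HB HMB. apply (Hneg B HB). split; [exact HMB|].
      apply (Hsplit g B Hbot). right; right; exact HB.
    + intros B HB. exact (proj1 (Hpos B HB)).
    + exists A. split; [exact HA|split; [exact HMA|]].
      apply (Hsplit g A Hbot). left; exact HA.
  - intros N HN HNsub A [HMA HUA].
    (* N, completed by the atoms of M outside U, is a model of the reduct of G. *)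
    set (M' := fun X => N X \/ (M X /\ ~ U X)).
    assert (HMM' : forall X, M X -> M' X).
    { apply Hmin.
      2: { intros X [HX|[HX _]]; [exact (proj1 (HNsub X HX))|exact HX]. }
      apply model_reduct_intro. intros g Hg Hneg Hpos.
      destruct (classic (exists A, In A (head g) /\ U A)) as [Hhead|Hhead].
      - destruct (model_reduct_elim (g := g) HN (conj Hg Hhead)) as [A' [HA' HNA']].
        + intros B HB [HMB _]. exact (Hneg B HB HMB).
        + intros B HB. destruct (Hpos B HB) as [HNB|[_ HnU]]; [exact HNB|].
          exfalso. apply HnU, (Hsplit g B (conj Hg Hhead)). right; left; exact HB.
        + exists A'. split; [exact HA'|left; exact HNA'].
      - destruct (model_reduct_elim HM Hg Hneg) as [A' [HA' HMA']].
        + intros B HB. destruct (Hpos B HB) as [HNB|[HMB _]]; [|exact HMB].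
          exact (proj1 (HNsub B HNB)).
        + exists A'. split; [exact HA'|right; split; [exact HMA'|]].
          intro HU. apply Hhead. exists A'; auto. }
    destruct (HMM' A HMA) as [HNA|[_ HnU]]; [exact HNA|contradiction].
Qed.

Lemma stable_model_of_local G (Gi : nat -> rule F Pr -> Prop) (U : nat -> atom F Pr -> Prop) M :
  (forall i g, Gi i g -> G g) ->
  (forall g, G g -> exists i, Gi i g) ->
  (forall i g B, Gi i g -> occurs_in B g -> U i B) ->
  (forall A, M A -> exists i, U i A) ->
  (forall i, stable_model_ground (Gi i) (restrict (U i) M)) ->
  stable_model_ground G M.
Proof.
  intros Hsub Hcov Hatoms HMcov Hloc. split.
  - apply model_reduct_intro. intros g Hg Hneg Hpos.
    destruct (Hcov g Hg) as [i Hgi].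
    destruct (model_reduct_elim (proj1 (Hloc i)) Hgi) as [A [HA [HMA _]]].
    + intros B HB [HMB _]. exact (Hneg B HB HMB).
    + intros B HB. split; [exact (Hpos B HB)|].
      apply (Hatoms i g B Hgi). right; left; exact HB.
    + exists A; auto.
  - intros N HN HNsub A HMA.
    destruct (HMcov A HMA) as [i HUA].
    assert (Hi : forall X, restrict (U i) M X -> restrict (U i) N X).
    { apply (proj2 (Hloc i)).
      2: { intros X [HNX HUX]. split; [exact (HNsub X HNX)|exact HUX]. }
      apply model_reduct_intro. intros g Hgi Hneg Hpos.
      destruct (model_reduct_elim HN (Hsub i g Hgi)) as [A' [HA' HNA']].
      + intros B HB HMB. apply (Hneg B HB). split; [exact HMB|].
        apply (Hatoms i g B Hgi). right; right; exact HB.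
      + intros B HB. exact (proj1 (Hpos B HB)).
      + exists A'. split; [exact HA'|split; [exact HNA'|]].
        apply (Hatoms i g A' Hgi). left; exact HA'. }
    exact (proj1 (Hi A (conj HMA HUA))).
Qed.

End StableModels.

Lemma ground_term_subst {F : Type} (s : nat -> term F) :
  (forall v, ground_term (s v)) -> forall t, ground_term (subst s t).
Proof.
  intro Hs. fix IH 1. intros [v|f ts]; simpl; [apply Hs|].
  revert ts. fix IHl 1. intros [|u ts]; simpl; [exact I|].
  split; [apply IH|apply IHl].
Qed.

Lemma ground_head_atom {F Pr : Type} {P : program F Pr} {g A} :
  Ground P g -> In A (head g) -> ground_atom A.
Proof.
  intros [r [s [_ [Hs ->]]]] HA. simpl in HA.
  apply in_map_iff in HA as [a [<- _]].
  apply Forall_forall. intros t Ht. simpl in Ht.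
  apply in_map_iff in Ht as [u [<- _]]. apply ground_term_subst, Hs.
Qed.

Section Modules.
Context {F Pr : Type} (P : program F Pr) (p : nat -> atom F Pr).

Definition deps (i : nat) (A : atom F Pr) : Prop := exists j, j <= i /\ depends P (p j) A.

Lemma deps_mono i k A : i <= k -> deps i A -> deps k A.
Proof. intros Hik [j [Hj Hd]]. exists j; split; [lia|exact Hd]. Qed.

Lemma module_deps i g B : module P p i g -> occurs_in B g -> deps i B.
Proof.
  intros [Hg [j [Hj [A [HA Hd]]]]] HB. exists j; split; [exact Hj|].
  apply rt_trans with A; [exact Hd|]. apply rt_step. exists g; auto.
Qed.

Lemma module_of_head i g A : Ground P g -> In A (head g) -> deps i A -> module P p i g.
Proof. intros Hg HA [j [Hj Hd]]. split; [exact Hg|]. exists j; split; [exact Hj|eauto]. Qed.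

Lemma bottom_module i k : i <= k -> bottom (module P p k) (deps i) = module P p i.
Proof.
  intro Hik. apply pred_ext; intro g. split.
  - intros [[Hg _] [A [HA HD]]]. exact (module_of_head i g A Hg HA HD).
  - intros [Hg [j [Hj [A [HA Hd]]]]]. split.
    + split; [exact Hg|]. exists j; split; [lia|eauto].
    + exists A; split; [exact HA|]. exists j; auto.
Qed.

Lemma stable_module_restrict i k M :
  i <= k -> stable_model_ground (module P p k) M ->
  stable_model_ground (module P p i) (restrict (deps i) M).
Proof.
  intros Hik HM. rewrite <- (bottom_module i k Hik).
  apply stable_model_bottom; [|exact HM].
  intros g B [[Hg _] [A [HA HD]]]. apply module_deps, (module_of_head i g A Hg HA HD).
Qed.

Lemma deps_finite :
  finitely_recursive P -> (forall j, GH P (p j)) ->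
  forall i, exists l, forall A, deps i A -> In A l.
Proof.
  intros FR Hp.
  assert (Hfin : forall j, exists l, forall A, depends P (p j) A -> In A l).
  { intro j. apply FR. destruct (Hp j) as [g [Hg HA]]. exact (ground_head_atom Hg HA). }
  induction i as [|i [l IH]].
  - destruct (Hfin 0) as [l Hl]. exists l. intros A [j [Hj Hd]].
    replace j with 0 in Hd by lia. exact (Hl A Hd).
  - destruct (Hfin (S i)) as [l' Hl']. exists (l ++ l'). intros A [j [Hj Hd]].
    apply in_or_app. destruct (PeanoNat.Nat.eq_dec j (S i)) as [->|Hne].
    + right; exact (Hl' A Hd).
    + left; apply IH. exists j; split; [lia|exact Hd].
Qed.

Lemma module_cover :
  well_formed P -> (forall A, GH P A -> exists i, p i = A) ->
  forall g, Ground P g -> exists i, module P p i g.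
Proof.
  intros WF Hp g Hg.
  assert (Hhead : exists A, In A (head g)).
  { destruct Hg as [r [s [Hr [_ ->]]]].
    destruct (head r) as [|A hs] eqn:E; [destruct (WF r Hr E)|].
    exists (subst_atom s A). simpl. rewrite E. left; reflexivity. }
  destruct Hhead as [A HA]. destruct (Hp A (ex_intro _ g (conj Hg HA))) as [i Hi].
  exists i. apply (module_of_head i g A Hg HA). exists i. split; [lia|].
  rewrite Hi. apply rt_refl.
Qed.

End Modules.

Theorem theorem4p1 (F Pr : Type) (P : program F Pr) :
  well_formed P ->
  finitely_recursive P ->
  (exists p : nat -> atom F Pr,
      enumerates_GH P p /\ consistent_module_sequence P p) ->
  consistent P.
Proof.
  intros WF FR [p [[Hp_GH Hp_onto] CS]].
  destruct (koenig_limit (deps P p) (fun i => stable_model_ground (module P p i)))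
    as [M [HMcov HMloc]].
  - intros i k A. apply deps_mono.
  - exact (deps_finite P p FR Hp_GH).
  - exact CS.
  - intros i k M. apply stable_module_restrict.
  - exists M. apply (stable_model_of_local (Ground P) (module P p) (deps P p) M).
    + intros i g [Hg _]. exact Hg.
    + exact (module_cover P p WF Hp_onto).
    + intros i g B. apply module_deps.
    + exact HMcov.
    + exact HMloc.
Qed.
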